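(* Let $\mathbb{F}$ be a field of characteristic zero, let $d\geq 2$ and $t\geq 1$ be integers, and let $\mathfrak{n}_{d,t}$ be the free $t$-step nilpotent Lie algebra over $\mathbb{F}$ on $d$ generators. Let $\mathfrak{t}$ be an ideal of $\mathfrak{n}_{d,t}$ such that $\mathfrak{t}\subseteq \mathfrak{n}_{d,t}^2$ and $\mathfrak{n}_{d,t}^t\not\subseteq \mathfrak{t}$. Define $$\mathrm{Aut}_{\mathfrak{t}}\,\mathfrak{n}_{d,t}=\{\Phi\in\mathrm{Aut}\,\mathfrak{n}_{d,t}:\ \Phi(\mathfrak{t})\subseteq\mathfrak{t}\},\qquad \mathrm{Aut}^\circ_{\mathfrak{t}}\,\mathfrak{n}_{d,t}=\{\Phi\in\mathrm{Aut}\,\mathfrak{n}_{d,t}:\ \mathrm{Im}(\Phi-\mathrm{Id})\subseteq\mathfrak{t}\}.$$ Then $\mathrm{Aut}^\circ_{\mathfrak{t}}\,\mathfrak{n}_{d,t}$ is a normal subgroup of $\mathrm{Aut}_{\mathfrak{t}}\,\mathfrak{n}_{d,t}$, and the automorphism group $\mathrm{Aut}\,\dfrac{\mathfrak{n}_{d,t}}{\mathfrak{t}}$ of the quotient Lie algebra is isomorphic to the quotient group $\dfrac{\mathrm{Aut}_{\mathfrak{t}}\,\mathfrak{n}_{d,t}}{\mathrm{Aut}^\circ_{\mathfrak{t}}\,\mathfrak{n}_{d,t}}$.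
   Context: All vector spaces are finite-dimensional. For a Lie algebra $\mathfrak{n}$, the lower central series is $\mathfrak{n}^1=\mathfrak{n}$, $\mathfrak{n}^{i+1}=[\mathfrak{n},\mathfrak{n}^i]$. The free $t$-step nilpotent Lie algebra on a set $U=\{x_1,\dots,x_d\}$ is $\mathfrak{n}_{d,t}=\mathfrak{FL}(U)/\mathfrak{FL}(U)^{t+1}$, where $\mathfrak{FL}(U)$ is the free Lie algebra over $\mathbb{F}$ generated by $U$. $\mathrm{Aut}\,\mathfrak{n}$ denotes the group of Lie algebra automorphisms of $\mathfrak{n}$. *)

From HB Require Import structures.
From mathcomp Require Import all_boot all_order all_algebra.

Set Implicit Arguments.
Unset Strict Implicit.
Unset Printing Implicit Defensive.

Import GRing.Theory.
Local Open Scope ring_scope.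

Definition is_lie (F : fieldType) (V : vectType F) (br : V -> V -> V) : Prop :=
  [/\ (forall (a : F) (u v w : V), br (a *: u + v) w = a *: br u w + br v w),
      (forall (a : F) (u v w : V), br w (a *: u + v) = a *: br w u + br w v),
      (forall u : V, br u u = 0) &
      (forall u v w : V, br u (br v w) + br v (br w u) + br w (br u v) = 0)].

(* [U, W] = span of all brackets [u, w], u in U, w in W (by bilinearity it is
   the span of the brackets of basis vectors). *)
Definition bracket_space (F : fieldType) (V : vectType F) (br : V -> V -> V)
    (U W : {vspace V}) : {vspace V} :=
  (<< [seq br u w | u <- vbasis U, w <- vbasis W] >>)%VS.

Fixpoint lcs_from (F : fieldType) (V : vectType F) (br : V -> V -> V) (k : nat)
    : {vspace V} :=
  if k is k'.+1 then bracket_space br fullv (lcs_from br k') else fullv.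

(* paper's indexing: lcs br 1 = n^1 = n, lcs br (i+1) = [n, n^i] *)
Definition lcs (F : fieldType) (V : vectType F) (br : V -> V -> V) (i : nat)
    : {vspace V} := lcs_from br i.-1.

Definition nilpotent_step (F : fieldType) (V : vectType F) (br : V -> V -> V)
    (t : nat) : Prop := lcs br t.+1 = 0%VS.

Definition lie_hom (F : fieldType) (V W : vectType F) (brV : V -> V -> V)
    (brW : W -> W -> W) (f : 'Hom(V, W)) : Prop :=
  forall u v : V, f (brV u v) = brW (f u) (f v).

Definition lie_aut (F : fieldType) (V : vectType F) (br : V -> V -> V)
    (f : 'End(V)) : Prop :=
  [/\ lie_hom br br f, lker f = 0%VS & limg f = fullv].

Definition lie_ideal (F : fieldType) (V : vectType F) (br : V -> V -> V)
    (I : {vspace V}) : Prop :=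
  forall u v : V, v \in I -> br u v \in I.

Definition is_free_nilpotent (F : fieldType) (d t : nat) (V : vectType F)
    (br : V -> V -> V) (x : 'I_d -> V) : Prop :=
  [/\ is_lie br, nilpotent_step br t &
      forall (W : vectType F) (brW : W -> W -> W),
        is_lie brW -> nilpotent_step brW t ->
        forall y : 'I_d -> W,
          exists! f : 'Hom(V, W), lie_hom br brW f /\ forall i, f (x i) = y i].
Arguments is_free_nilpotent {F} d t {V} br x.

Definition is_lie_quotient (F : fieldType) (V Q : vectType F)
    (br : V -> V -> V) (I : {vspace V}) (brQ : Q -> Q -> Q) (pi : 'Hom(V, Q))
    : Prop :=
  [/\ is_lie brQ, lie_hom br brQ pi, limg pi = fullv & lker pi = I].

(* Group-theoretic notions for groups of endomorphisms under composition;
   the group inverse of a bijective endomorphism f is (f^-1)%VF. *)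
Definition End_subgroup (F : fieldType) (V : vectType F)
    (G H : 'End(V) -> Prop) : Prop :=
  [/\ (forall f, H f -> G f), H \1%VF,
      (forall f g, H f -> H g -> H (f \o g)%VF) &
      (forall f, H f -> H (f^-1)%VF)].

Definition End_normal_subgroup (F : fieldType) (V : vectType F)
    (G N : 'End(V) -> Prop) : Prop :=
  End_subgroup G N /\
  forall g n, G g -> N n -> N (g \o n \o g^-1)%VF.

(* psi induces a group isomorphism from the quotient group G / N onto H:
   psi is multiplicative on G, psi f = psi g iff f N = g N (i.e. f^-1 g in N),
   psi maps G into H and onto H. *)
Definition quotient_group_iso (F : fieldType) (V W : vectType F)
    (G N : 'End(V) -> Prop) (H : 'End(W) -> Prop)
    (psi : 'End(V) -> 'End(W)) : Prop :=
  [/\ (forall f, G f -> H (psi f)),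
      (forall f g, G f -> G g -> psi (f \o g)%VF = (psi f \o psi g)%VF),
      (forall f g, G f -> G g -> (psi f = psi g <-> N (f^-1 \o g)%VF)) &
      (forall h, H h -> exists2 f, G f & psi f = h)].

Definition Aut_stab (F : fieldType) (V : vectType F) (br : V -> V -> V)
    (T : {vspace V}) (f : 'End(V)) : Prop :=
  lie_aut br f /\ (f @: T <= T)%VS.

Definition Aut_triv (F : fieldType) (V : vectType F) (br : V -> V -> V)
    (T : {vspace V}) (f : 'End(V)) : Prop :=
  lie_aut br f /\ (limg (f - \1%VF) <= T)%VS.

(* The quotient map [pi : n -> n/t] turns every automorphism preserving t
   into an automorphism of n/t, and this is a group morphism whose kernel
   consists exactly of the automorphisms inducing the identity on n/t.  It is
   onto because n is free: an automorphism h of n/t and its inverse lift to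
   endomorphisms f, g of n, and g f is the identity modulo t, hence modulo
   [n, n]; an endomorphism that is the identity modulo [n, n] is unipotent on
   the lower central series of a nilpotent Lie algebra, hence injective. *)

From HB Require Import structures.
From mathcomp Require Import all_boot all_order all_algebra.

Set Implicit Arguments.
Unset Strict Implicit.
Unset Printing Implicit Defensive.

Import GRing.Theory.
Local Open Scope ring_scope.

Lemma bracket_space_subv (F : fieldType) (V : vectType F) (br : V -> V -> V)
    (U W S : {vspace V}) :
  (forall u w, u \in U -> w \in W -> br u w \in S) ->
  (bracket_space br U W <= S)%VS.
Proof.
move=> brUW; apply/span_subvP => _ /allpairsP [[u w] [/= uU wW ->]].
by apply: brUW; apply: vbasis_mem.
Qed.

Section LieBracket.
Variables (F : fieldType) (V : vectType F) (br : V -> V -> V).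
Hypothesis lie_br : is_lie br.

Lemma lie_br0l w : br 0 w = 0.
Proof.
case: lie_br => linl _ _ _; have := linl 1 0 0 w; rewrite scaler0 addr0 scale1r.
by move/(congr1 (fun z => z - br 0 w)); rewrite subrr addrK.
Qed.

Lemma lie_br0r w : br w 0 = 0.
Proof.
case: lie_br => _ linr _ _; have := linr 1 0 0 w; rewrite scaler0 addr0 scale1r.
by move/(congr1 (fun z => z - br w 0)); rewrite subrr addrK.
Qed.

Lemma lie_brDl u v w : br (u + v) w = br u w + br v w.
Proof.
by case: lie_br => linl _ _ _; have := linl 1 u v w; rewrite !scale1r.
Qed.

Lemma lie_brDr u v w : br w (u + v) = br w u + br w v.
Proof.
by case: lie_br => _ linr _ _; have := linr 1 u v w; rewrite !scale1r.
Qed.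

Lemma lie_brZl a u w : br (a *: u) w = a *: br u w.
Proof.
case: lie_br => linl _ _ _; have := linl a u 0 w.
by rewrite !addr0 lie_br0l addr0.
Qed.

Lemma lie_brZr a u w : br w (a *: u) = a *: br w u.
Proof.
case: lie_br => _ linr _ _; have := linr a u 0 w.
by rewrite !addr0 lie_br0r addr0.
Qed.

Lemma lie_brC u v : br u v = - br v u.
Proof.
case: lie_br => _ _ alt _; have := alt (u + v).
rewrite lie_brDl !lie_brDr !alt add0r addr0 => /eqP.
by rewrite addr_eq0 => /eqP.
Qed.

Lemma lie_br_suml n (G : 'I_n -> V) w :
  br (\sum_(i < n) G i) w = \sum_(i < n) br (G i) w.
Proof.
exact: (big_morph (br^~ w) (fun u v => lie_brDl u v w) (lie_br0l w)).
Qed.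

Lemma lie_br_sumr n (G : 'I_n -> V) w :
  br w (\sum_(i < n) G i) = \sum_(i < n) br w (G i).
Proof. exact: (big_morph (br w) (fun u v => lie_brDr u v w) (lie_br0r w)). Qed.

Lemma mem_bracket_space (U W : {vspace V}) u w :
  u \in U -> w \in W -> br u w \in bracket_space br U W.
Proof.
move=> uU wW; rewrite (coord_vbasis uU) (coord_vbasis wW) lie_br_suml.
apply: memv_suml => i _; rewrite lie_brZl lie_br_sumr; apply: memvZ.
apply: memv_suml => j _; rewrite lie_brZr; apply: memvZ; apply: memv_span.
by apply: allpairs_f; apply: mem_nth; rewrite size_tuple.
Qed.

Lemma lie_br_spanl (X : seq V) (S : {vspace V}) c :
  {in X, forall g, br g c \in S} -> {in <<X>>%VS, forall v, br v c \in S}.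
Proof.
move=> brXc v vX; rewrite (coord_span (X := in_tuple X) vX) lie_br_suml.
apply: memv_suml => i _; rewrite lie_brZl; apply: memvZ; apply: brXc.
exact: mem_nth.
Qed.

Local Notation L k := (lcs_from br k).

Lemma lcs_from_brr k u w : w \in L k -> br u w \in L k.+1.
Proof. by move=> wk; apply: mem_bracket_space => //; apply: memvf. Qed.

Lemma lcs_from_brl k u w : u \in L k -> br u w \in L k.+1.
Proof. by move=> uk; rewrite lie_brC memvN; apply: lcs_from_brr. Qed.

(* Jacobi: [[a, b], c] = [a, [b, c]] + [b, [c, a]]. *)
Lemma lcs_from1_br k v c : v \in L 1 -> c \in L k -> br v c \in L k.+2.
Proof.
move=> v1 ck; apply: (lie_br_spanl _ v1) => _ /allpairsP [[a b] [_ _ ->]] /=.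
case: lie_br => _ _ _ jacobi; move/eqP: (jacobi c a b).
rewrite (lie_brC (br a b) c) -addrA addr_eq0 => /eqP ->; rewrite opprK.
by apply: memvD; apply: (@lcs_from_brr k.+1);
  [apply: lcs_from_brr | apply: lcs_from_brl].
Qed.

Section Unipotent.
Variable e : 'End(V).
Hypotheses (hom_e : lie_hom br br e) (e_id_mod1 : forall v, e v - v \in L 1).

Lemma lie_hom_id_mod_lcs_from k v : v \in L k -> e v - v \in L k.+1.
Proof.
elim: k v => [|k IHk] v; first by move=> _; apply: e_id_mod1.
suff /subvP sub : (L k.+1 <= (e - \1)%VF @^-1: L k.+2)%VS.
  by move/sub; rewrite -memv_preim add_lfunE opp_lfunE id_lfunE.
apply: bracket_space_subv => u w _ wk.
rewrite -memv_preim add_lfunE opp_lfunE id_lfunE hom_e.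
rewrite -(subrK u (e u)) -(subrK w (e w)).
move: (e u - u) (e w - w) (e_id_mod1 u) (IHk w wk) => du dw du1 dwk.
rewrite lie_brDl !lie_brDr addrA addrK.
apply: memvD; first apply: memvD.
- exact: lcs_from_brr.
- exact: lcs_from1_br.
- exact: lcs_from_brr.
Qed.

Lemma lie_hom_id_mod_lcs_inj t : L t = 0%VS -> injective e.
Proof.
move=> Lt; suff ker0 v : e v = 0 -> v = 0.
  move=> u v euv; apply/eqP; rewrite -subr_eq0; apply/eqP/ker0.
  by rewrite linearB /= euv subrr.
move=> ev0; suff : v \in L t by rewrite Lt memv0 => /eqP.
elim: t {Lt} => [|k IHk]; first exact: memvf.
by have := lie_hom_id_mod_lcs_from IHk; rewrite ev0 sub0r memvN.
Qed.

End Unipotent.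

Lemma lcs_from_limg (Q : vectType F) (brQ : Q -> Q -> Q) (pi : 'Hom(V, Q)) k :
  lie_hom br brQ pi -> limg pi = fullv -> (lcs_from brQ k <= pi @: L k)%VS.
Proof.
move=> hom_pi pi_onto; elim: k => [|k IHk] /=; first by rewrite pi_onto subvv.
apply: bracket_space_subv => u _ _ /(subvP IHk)/memv_imgP [w wk ->].
have /memv_imgP [v _ ->] : u \in limg pi by rewrite pi_onto memvf.
by rewrite -hom_pi memv_img // mem_bracket_space ?memvf.
Qed.

Lemma nilpotent_step_limg (Q : vectType F) (brQ : Q -> Q -> Q)
    (pi : 'Hom(V, Q)) t :
  lie_hom br brQ pi -> limg pi = fullv ->
  nilpotent_step br t -> nilpotent_step brQ t.
Proof.
rewrite /nilpotent_step /lcs /= => hom_pi pi_onto nil_t; apply/eqP.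
by rewrite -subv0 (subv_trans (lcs_from_limg t hom_pi pi_onto)) // nil_t limg0.
Qed.

End LieBracket.

Section LieAut.
Variables (F : fieldType) (V : vectType F) (br : V -> V -> V).
Implicit Types f g : 'End(V).

Lemma lie_aut_hom f : lie_aut br f -> lie_hom br br f.
Proof. by case. Qed.

Lemma lie_aut_inj f : lie_aut br f -> injective f.
Proof. by case=> _ /eqP ker0 _; apply/lker0P. Qed.

Lemma lie_autK f : lie_aut br f -> cancel f f^-1%VF.
Proof. by case=> _ /eqP ker0 _; apply: lker0_lfunK. Qed.

Lemma lie_autVK f : lie_aut br f -> cancel f^-1%VF f.
Proof. by case=> _ /eqP ker0 _; apply: lker0_lfunVK. Qed.

Lemma lie_hom_inj_aut f : lie_hom br br f -> injective f -> lie_aut br f.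
Proof.
by move=> hom_f /lker0P ker0; split=> //; [apply/eqP | apply: lker0_limgf].
Qed.

Lemma lie_aut1 : lie_aut br \1%VF.
Proof. by apply: lie_hom_inj_aut => [u v|u v]; rewrite !id_lfunE. Qed.

Lemma lie_autM f g : lie_aut br f -> lie_aut br g -> lie_aut br (f \o g)%VF.
Proof.
move=> aut_f aut_g; apply: lie_hom_inj_aut => u v; rewrite !comp_lfunE.
  by rewrite (lie_aut_hom aut_g) (lie_aut_hom aut_f).
by move/(lie_aut_inj aut_f)/(lie_aut_inj aut_g).
Qed.

Lemma lie_autV f : lie_aut br f -> lie_aut br f^-1%VF.
Proof.
move=> aut_f; apply: lie_hom_inj_aut; last exact: can_inj (lie_autVK aut_f).
move=> u v; apply: (lie_aut_inj aut_f).
by rewrite (lie_aut_hom aut_f) !(lie_autVK aut_f).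
Qed.

Lemma limg_subvP f (T : {vspace V}) :
  reflect {in T, forall v, f v \in T} (f @: T <= T)%VS.
Proof.
apply: (iffP subvP) => [fT v vT | fT _ /memv_imgP [v vT ->]]; last exact: fT.
by apply: fT; apply: memv_img.
Qed.

Lemma limg_subr1_subvP f (T : {vspace V}) :
  reflect (forall v, f v - v \in T) (limg (f - \1%VF) <= T)%VS.
Proof.
apply: (iffP subvP) => [fT v | fT _ /memv_imgP [v _ ->]].
  have := fT _ (memv_img (f - \1)%VF (memvf v)).
  by rewrite add_lfunE opp_lfunE id_lfunE.
by rewrite add_lfunE opp_lfunE id_lfunE.
Qed.

Variable T : {vspace V}.

Lemma limg_comp_subv f g :
  (f @: T <= T)%VS -> (g @: T <= T)%VS -> ((f \o g) @: T <= T)%VS.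
Proof. by move=> fT gT; rewrite limg_comp (subv_trans _ fT) // limgS. Qed.

Lemma lie_aut_limg_eq f : lie_aut br f -> (f @: T <= T)%VS -> (f @: T)%VS = T.
Proof.
case=> _ ker0 _ fT; apply/eqP.
by rewrite eqEdim fT limg_dim_eq ?leqnn // ker0 capv0.
Qed.

Lemma Aut_stab_memV f v : Aut_stab br T f -> f v \in T -> v \in T.
Proof.
case=> aut_f fT; rewrite -{1}(lie_aut_limg_eq aut_f fT).
by case/memv_imgP=> u uT /(lie_aut_inj aut_f) ->.
Qed.

Lemma Aut_stab_subgroup : End_subgroup (lie_aut br) (Aut_stab br T).
Proof.
split=> [f [] // | | f g [aut_f fT] [aut_g gT] | f [aut_f fT]].
- by split; [apply: lie_aut1 | rewrite lim1g].
- by split; [apply: lie_autM | apply: limg_comp_subv].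
- split; first exact: lie_autV.
  apply/limg_subvP => v vT; apply: (@Aut_stab_memV f) => //.
  by rewrite lie_autVK.
Qed.

Lemma Aut_triv_stab f : Aut_triv br T f -> Aut_stab br T f.
Proof.
case=> aut_f /limg_subr1_subvP fT; split=> //; apply/limg_subvP => v vT.
by rewrite -(subrK v (f v)) memvD.
Qed.

Lemma Aut_triv_normal : End_normal_subgroup (Aut_stab br T) (Aut_triv br T).
Proof.
split; first split.
- exact: Aut_triv_stab.
- split; first exact: lie_aut1.
  by apply/limg_subr1_subvP => v; rewrite id_lfunE subrr mem0v.
- move=> f g [aut_f /limg_subr1_subvP fT] [aut_g /limg_subr1_subvP gT].
  split; first exact: lie_autM.
  apply/limg_subr1_subvP => v; rewrite comp_lfunE.
  by rewrite -(subrK (g v) (f (g v))) -addrA memvD.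
- move=> f [aut_f /limg_subr1_subvP fT]; split; first exact: lie_autV.
  by apply/limg_subr1_subvP => v; rewrite -opprB -{1}[v](lie_autVK aut_f) memvN.
move=> g n [aut_g /limg_subvP gT] [aut_n /limg_subr1_subvP nT].
split; first by apply: lie_autM; [apply: lie_autM | apply: lie_autV].
apply/limg_subr1_subvP => v; rewrite !comp_lfunE -{2}[v](lie_autVK aut_g).
by rewrite -linearB gT.
Qed.

End LieAut.

Lemma onto_lfunVK (F : fieldType) (V W : vectType F) (pi : 'Hom(V, W)) :
  limg pi = fullv -> cancel pi^-1%VF pi.
Proof. by move=> pi_onto w; rewrite limg_lfunVK // pi_onto memvf. Qed.

Section FreeNilpotentLift.
Variables (F : fieldType) (d t : nat) (V : vectType F) (br : V -> V -> V).
Variable x : 'I_d -> V.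
Hypothesis free_V : is_free_nilpotent d t br x.

Lemma free_nilpotent_lift (W : vectType F) (brW : W -> W -> W)
    (pi : 'Hom(V, W)) (k : 'End(W)) :
  is_lie brW -> nilpotent_step brW t ->
  lie_hom br brW pi -> limg pi = fullv -> lie_hom brW brW k ->
  exists2 f : 'End(V), lie_hom br br f & forall v, pi (f v) = k (pi v).
Proof.
move=> lie_brW nil_W hom_pi pi_onto hom_k; case: free_V => lie_br nil_V univ.
have [f [[hom_f fx] _]] :=
  univ V br lie_br nil_V (fun i => pi^-1%VF (k (pi (x i)))).
exists f => // v0.
suff /lfunP/(_ v0) : (pi \o f = k \o pi)%VF by rewrite !comp_lfunE.
have [g [_ g_uniq]] := univ W brW lie_brW nil_W (fun i => k (pi (x i))).
transitivity g; [symmetry|]; apply: g_uniq; split=> [u v|i];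
  rewrite !comp_lfunE //.
- by rewrite hom_f hom_pi.
- by rewrite fx onto_lfunVK.
- by rewrite hom_pi hom_k.
Qed.

End FreeNilpotentLift.

Section InducedAut.
Variables (F : fieldType) (V Q : vectType F).
Variables (br : V -> V -> V) (brQ : Q -> Q -> Q) (T : {vspace V}).
Variable pi : 'Hom(V, Q).
Hypotheses (hom_pi : lie_hom br brQ pi) (pi_onto : limg pi = fullv).
Hypothesis ker_pi : lker pi = T.
Implicit Types f g : 'End(V).

(* [pi^-1] is some linear section of [pi]; its choice is irrelevant as soon
   as [f] preserves [T = lker pi] (see [induced_endE]). *)
Definition induced_end (f : 'End(V)) : 'End(Q) := (pi \o f \o pi^-1)%VF.

Let pi_lfunVK := onto_lfunVK pi_onto.

Lemma mem_ker_pi v : (v \in T) = (pi v == 0).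
Proof. by rewrite -ker_pi memv_ker. Qed.

Lemma induced_endE f :
  (f @: T <= T)%VS -> forall v, induced_end f (pi v) = pi (f v).
Proof.
move=> /limg_subvP fT v; apply/eqP; rewrite !comp_lfunE -subr_eq0 -!linearB /=.
by rewrite -mem_ker_pi fT // mem_ker_pi linearB /= pi_lfunVK subrr.
Qed.

Lemma induced_end_aut f : Aut_stab br T f -> lie_aut brQ (induced_end f).
Proof.
case=> aut_f fT; apply: lie_hom_inj_aut => a b;
  rewrite -(pi_lfunVK a) -(pi_lfunVK b); move: (pi^-1%VF a) (pi^-1%VF b) => u v.
  by rewrite -hom_pi !induced_endE // (lie_aut_hom aut_f) hom_pi.
rewrite !induced_endE // => /eqP; rewrite -subr_eq0 -!linearB /= -mem_ker_pi.
move=> /(@Aut_stab_memV _ _ br T f _ (conj aut_f fT)).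
by rewrite mem_ker_pi linearB /= subr_eq0 => /eqP.
Qed.

Lemma induced_endM f g : (f @: T <= T)%VS -> (g @: T <= T)%VS ->
  induced_end (f \o g)%VF = (induced_end f \o induced_end g)%VF.
Proof.
move=> fT gT; apply/lfunP => q; rewrite -(pi_lfunVK q) comp_lfunE.
by rewrite !induced_endE ?limg_comp_subv // comp_lfunE.
Qed.

Lemma induced_end_eqP f g : Aut_stab br T f -> Aut_stab br T g ->
  induced_end f = induced_end g <-> Aut_triv br T (f^-1 \o g)%VF.
Proof.
move=> stab_f [aut_g gT]; have [aut_f fT] := stab_f.
have [_ _ _ /(_ f stab_f) [_ /limg_subvP fVT]] := Aut_stab_subgroup br T.
split=> [eq_fg | [_ /limg_subr1_subvP fVgT]].
  split; first by apply: lie_autM; [apply: lie_autV | ].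
  apply/limg_subr1_subvP => v; rewrite comp_lfunE -{2}[v](lie_autK aut_f).
  rewrite -linearB fVT // mem_ker_pi linearB /= -!induced_endE //.
  by rewrite eq_fg subrr.
apply/lfunP => q; rewrite -(pi_lfunVK q) !induced_endE //; apply/eqP.
have := limg_subvP _ _ fT _ (fVgT (pi^-1%VF q)).
rewrite linearB /= comp_lfunE (lie_autVK aut_f).
by rewrite mem_ker_pi linearB /= subr_eq0 eq_sym.
Qed.

Lemma induced_end_onto d t (x : 'I_d -> V) (h : 'End(Q)) :
  is_lie brQ -> is_free_nilpotent d t br x -> (T <= lcs br 2)%VS ->
  lie_aut brQ h -> exists2 f, Aut_stab br T f & induced_end f = h.
Proof.
move=> lie_brQ free_V T_sub aut_h; have [lie_br nil_V _] := free_V.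
have nil_Q := nilpotent_step_limg lie_br hom_pi pi_onto nil_V.
have lift := free_nilpotent_lift free_V lie_brQ nil_Q hom_pi pi_onto.
have [f hom_f pi_f] := lift h (lie_aut_hom aut_h).
have [g hom_g pi_g] := lift h^-1%VF (lie_aut_hom (lie_autV aut_h)).
have inj_gf : injective (g \o f)%VF.
  apply: (lie_hom_id_mod_lcs_inj lie_br _ _ nil_V) => [u v | v].
    by rewrite !comp_lfunE hom_f hom_g.
  apply: (subvP T_sub); rewrite mem_ker_pi linearB /= comp_lfunE pi_g pi_f.
  by rewrite (lie_autK aut_h) subrr.
have aut_f : lie_aut br f.
  apply: lie_hom_inj_aut => // u v fuv.
  by apply: inj_gf; rewrite !comp_lfunE fuv.
exists f; first split=> //.
  apply/limg_subvP => v; rewrite !mem_ker_pi pi_f => /eqP ->.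
  by rewrite linear0.
by apply/lfunP => q; rewrite !comp_lfunE pi_f pi_lfunVK.
Qed.

Lemma induced_end_quotient_group_iso d t (x : 'I_d -> V) :
  is_lie brQ -> is_free_nilpotent d t br x -> (T <= lcs br 2)%VS ->
  quotient_group_iso (Aut_stab br T) (Aut_triv br T) (lie_aut brQ) induced_end.
Proof.
move=> lie_brQ free_V T_sub; split.
- exact: induced_end_aut.
- by move=> f g [_ fT] [_ gT]; apply: induced_endM.
- exact: induced_end_eqP.
- by move=> h; apply: induced_end_onto free_V T_sub.
Qed.

End InducedAut.

Theorem theorem2 (F : fieldType) (d t : nat) (V : vectType F)
    (br : V -> V -> V) (x : 'I_d -> V) (T : {vspace V})
    (Q : vectType F) (brQ : Q -> Q -> Q) (pi : 'Hom(V, Q)) :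
  [pchar F] =i pred0 ->
  (2 <= d)%N -> (1 <= t)%N ->
  is_free_nilpotent d t br x ->
  lie_ideal br T ->
  (T <= lcs br 2)%VS ->
  ~~ (lcs br t <= T)%VS ->
  is_lie_quotient br T brQ pi ->
  [/\ End_subgroup (lie_aut br) (Aut_stab br T),
      End_normal_subgroup (Aut_stab br T) (Aut_triv br T) &
      exists psi : 'End(V) -> 'End(Q),
        quotient_group_iso (Aut_stab br T) (Aut_triv br T) (lie_aut brQ) psi].
Proof.
move=> _ _ _ free_V _ T_sub _ [lie_brQ hom_pi pi_onto ker_pi].
split; [exact: Aut_stab_subgroup | exact: Aut_triv_normal |].
by exists (induced_end pi); apply: induced_end_quotient_group_iso free_V T_sub.
Qed.
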